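(* Let $\mathbb X,\mathbb Y,\mathbb X^\sharp,\mathbb Y^\sharp$ be sets and let $c:\mathbb X\times\mathbb X^\sharp\to\overline{\mathbb R}$ and $d:\mathbb Y\times\mathbb Y^\sharp\to\overline{\mathbb R}$ be coupling functions. Let $K:\mathbb X\times\mathbb Y\to\overline{\mathbb R}$, $f:\mathbb X\to\overline{\mathbb R}$ and $g:\mathbb Y\to\overline{\mathbb R}$ be arbitrary functions. If $$f(x)\ \ge\ \inf_{y\in\mathbb Y}\big(K(x,y)\mathbin{\overset{\cdot}{+}} g(y)\big)\quad\text{for all }x\in\mathbb X,$$ then $$f^{c}(x^\sharp)\ \le\ \inf_{y^\sharp\in\mathbb Y^\sharp}\big(K^{c\mathbin{\underset{\cdot}{+}} d}(x^\sharp,y^\sharp)\mathbin{\overset{\cdot}{+}} g^{-d}(y^\sharp)\big)\quad\text{for all }x^\sharp\in\mathbb X^\sharp.$$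
   Context: $\overline{\mathbb R}=[-\infty,+\infty]$. The Moreau lower addition $\mathbin{\underset{\cdot}{+}}$ is the usual addition extended by $(+\infty)\mathbin{\underset{\cdot}{+}}(-\infty)=(-\infty)\mathbin{\underset{\cdot}{+}}(+\infty)=-\infty$; the Moreau upper addition $\mathbin{\overset{\cdot}{+}}$ is the usual addition extended by $(+\infty)\mathbin{\overset{\cdot}{+}}(-\infty)=(-\infty)\mathbin{\overset{\cdot}{+}}(+\infty)=+\infty$. For a coupling $c:\mathbb X\times\mathbb X^\sharp\to\overline{\mathbb R}$ and $f:\mathbb X\to\overline{\mathbb R}$, the Fenchel–Moreau conjugate is $f^{c}(x^\sharp)=\sup_{x\in\mathbb X}\big(c(x,x^\sharp)\mathbin{\underset{\cdot}{+}}(-f(x))\big)$. In particular $g^{-d}(y^\sharp)=\sup_{y\in\mathbb Y}\big((-d(y,y^\sharp))\mathbin{\underset{\cdot}{+}}(-g(y))\big)$. The sum coupling $c\mathbin{\underset{\cdot}{+}} d$ between $\mathbb X\times\mathbb Y$ and $\mathbb X^\sharp\times\mathbb Y^\sharp$ is $((x,y),(x^\sharp,y^\sharp))\mapsto c(x,x^\sharp)\mathbin{\underset{\cdot}{+}} d(y,y^\sharp)$, so that $K^{c\mathbin{\underset{\cdot}{+}} d}(x^\sharp,y^\sharp)=\sup_{x\in\mathbb X,y\in\mathbb Y}\big(c(x,x^\sharp)\mathbin{\underset{\cdot}{+}} d(y,y^\sharp)\mathbin{\underset{\cdot}{+}}(-K(x,y))\big)$. *)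

From mathcomp Require Import all_boot all_algebra all_classical all_reals.
From mathcomp Require Import ereal.
Import Num.Theory.
Local Open Scope classical_set_scope.
Local Open Scope ereal_scope.

(* Conventions: in MathComp-Analysis, [x + y] on \bar R is the Moreau lower
   addition (+oo + -oo = -oo) and [x +' y] is the Moreau upper addition
   (+oo +' -oo = +oo). *)

Definition fm_conj {R : realType} {X Xs : Type}
  (c : X -> Xs -> \bar R) (f : X -> \bar R) : Xs -> \bar R :=
  fun xs => ereal_sup [set c x xs + - f x | x in [set: X]].

Definition sum_coupling {R : realType} {X Y Xs Ys : Type}
  (c : X -> Xs -> \bar R) (d : Y -> Ys -> \bar R) :
  (X * Y) -> (Xs * Ys) -> \bar R :=
  fun p q => c p.1 q.1 + d p.2 q.2.

From mathcomp Require Import all_boot all_algebra all_classical all_reals.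
From mathcomp Require Import order ereal lra.
Import Order.TTheory DualAddTheory.
Local Open Scope classical_set_scope.
Local Open Scope ereal_scope.

(* A Fenchel-Young argument: for fixed x, y, inserting and removing d(y,y#)
   in c(x,x#) - K(x,y) - g(y) bounds it by the upper sum of a term of the
   supremum defining K^{c+d}(x#,y#) and a term of the one defining g^{-d}(y#).
   Taking suprema over x and y, the right-hand side thus bounds the conjugate
   at x# of x |-> inf_y (K(x,y) +' g(y)), which dominates f^c(x#) because
   conjugation is antitone. *)

Section ExtendedRealInequalities.
Context {R : realType}.

(* Holds for infinite [e] too, because an undefined [+oo - oo] is resolved
   as [-oo] on the left and as [+oo] on the right. *)
Lemma adde_le_dual_adde_split (u v e : \bar R) :
  u + v <= dual_adde (u + e) (- e + v).
Proof.
case: u => [u||]; case: v => [v||]; case: e => [e||];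
  rewrite /dual_adde /= ?lee_fin ?leey ?leNye //; lra.
Qed.

Lemma ge_adde_ereal_sup (a M : \bar R) (S : set \bar R) :
  ubound [set a + s | s in S] M -> a + ereal_sup S <= M.
Proof.
move=> aSM; case: a aSM => [r||] aSM.
- rewrite -leeBrDl //; apply/ereal_supP => s Ss.
  by rewrite leeBrDl //; apply: aSM; exists s.
- have [->|] := eqVneq (ereal_sup S) -oo; first by rewrite addeNy leNye.
  rewrite -ltNye => /ereal_sup_gt [s Ss s_gtNy].
  have := aSM (+oo + s) (ex_intro2 _ _ s Ss erefl).
  by rewrite addye ?gt_eqF // leye_eq => /eqP ->; rewrite leey.
- by rewrite addNye leNye.
Qed.

End ExtendedRealInequalities.

Section FenchelMoreauConjugate.
Context {R : realType} {X Xs : Type} (c : X -> Xs -> \bar R).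

Lemma fm_conj_ge (f : X -> \bar R) x xs : c x xs + - f x <= fm_conj c f xs.
Proof. by apply: ereal_sup_ubound; exists x. Qed.

Lemma fm_conj_le_antitone (f h : X -> \bar R) xs :
  (forall x, h x <= f x) -> fm_conj c f xs <= fm_conj c h xs.
Proof.
move=> hf; apply: ge_ereal_sup => _ [x _ <-].
by apply: le_trans _ (fm_conj_ge h x xs); rewrite leeD2l // leeN2.
Qed.

Lemma ge_fm_conj_inf (Y : Type) (F : X -> Y -> \bar R) xs M :
  (forall x y, c x xs + - F x y <= M) ->
  fm_conj c (fun x => ereal_inf [set F x y | y in [set: Y]]) xs <= M.
Proof.
move=> cFM; apply: ge_ereal_sup => _ [x _ <-].
rewrite ereal_infEN oppeK; apply: ge_adde_ereal_sup => _ [_ [_ [y _ <-] <-] <-].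
exact: cFM.
Qed.

End FenchelMoreauConjugate.

Lemma fm_conj_sum_coupling_young (R : realType) (X Y Xs Ys : Type)
  (c : X -> Xs -> \bar R) (d : Y -> Ys -> \bar R)
  (K : X -> Y -> \bar R) (g : Y -> \bar R) x y xs ys :
  c x xs + - dual_adde (K x y) (g y) <=
  dual_adde (fm_conj (sum_coupling c d) (fun p => K p.1 p.2) (xs, ys))
            (fm_conj (fun y ys => - d y ys) g ys).
Proof.
have -> : c x xs + - dual_adde (K x y) (g y) = (c x xs + - K x y) + - g y.
  by rewrite (dual_addeE _ _ : dual_adde _ _ = _) oppeK addeA.
apply: le_trans (adde_le_dual_adde_split _ _ (d y ys)) _.
apply: lee_dD.
- by rewrite addeAC; apply: (fm_conj_ge _ (fun p => K p.1 p.2) (x, y)).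
- exact: fm_conj_ge.
Qed.

Theorem theorem1 (R : realType) (X Y Xs Ys : Type)
  (c : X -> Xs -> \bar R) (d : Y -> Ys -> \bar R)
  (K : X -> Y -> \bar R) (f : X -> \bar R) (g : Y -> \bar R) :
  (forall x : X, ereal_inf [set dual_adde (K x y) (g y) | y in [set: Y]] <= f x) ->
  forall xs : Xs,
    fm_conj c f xs <=
    ereal_inf [set dual_adde
                   (fm_conj (sum_coupling c d) (fun p => K p.1 p.2) (xs, ys))
                   (fm_conj (fun y ys => - d y ys) g ys) | ys in [set: Ys]].
Proof.
move=> f_ge_inf xs; apply: le_ereal_inf_tmp => _ [ys _ <-].
apply: le_trans (fm_conj_le_antitone c _ _ xs f_ge_inf) _.
apply: ge_fm_conj_inf => x y.
exact: fm_conj_sum_coupling_young.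
Qed.
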